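(* For every $n\ge 1$, $d(L(n,2n-2)) \ge n^2 - \lfloor \frac{8n}{5}\rfloor$.
   Context: For positive integers $n,k$, let $\mathcal{L}_{n,k}$ be the set of $n\times n$ squares all of whose entries are colored with colors from a fixed set of $k$ colors $\{1,\dots,k\}$ such that any two entries in the same row, or in the same column, have different colors. A partial coloring of an $n\times n$ square assigns colors from $\{1,\dots,k\}$ to some of its entries; the remaining entries are called uncolored. A partial coloring extends to $L(n,k)$ if the uncolored entries can be colored so that the resulting fully colored square lies in $\mathcal{L}_{n,k}$ (keeping the given colors), and it uniquely extends to $L(n,k)$ if there is exactly one such way. A defining set of the $k$-coloring of an $n\times n$ square is the set of colored entries of a partial coloring that uniquely extends to $L(n,k)$; the defining number $d(L(n,k))$ is the minimum cardinality of such a defining set. *)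

From mathcomp Require Import all_boot.
Set Implicit Arguments. Unset Strict Implicit. Unset Printing Implicit Defensive.

(* Cells of an n x n square are pairs (row, column) in 'I_n * 'I_n;
   colors are 'I_k (i.e. {1,...,k} shifted to {0,...,k-1}). *)
Definition cell (n : nat) := ('I_n * 'I_n)%type.

Definition coloring (n k : nat) := {ffun cell n -> 'I_k}.

(* A partial coloring: None = uncolored entry. *)
Definition pcoloring (n k : nat) := {ffun cell n -> option 'I_k}.

Definition in_L (n k : nat) (c : coloring n k) : Prop :=
  (forall i j j' : 'I_n, j != j' -> c (i, j) != c (i, j')) /\
  (forall i i' j : 'I_n, i != i' -> c (i, j) != c (i', j)).

Definition extends_to (n k : nat) (P : pcoloring n k) (c : coloring n k) : Prop :=
  forall x a, P x = Some a -> c x = a.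

Definition extends (n k : nat) (P : pcoloring n k) : Prop :=
  exists c : coloring n k, in_L c /\ extends_to P c.

Definition uniquely_extends (n k : nat) (P : pcoloring n k) : Prop :=
  exists! c : coloring n k, in_L c /\ extends_to P c.

Definition colored (n k : nat) (P : pcoloring n k) : {set cell n} :=
  [set x | P x != None].

Definition defining_set (n k : nat) (D : {set cell n}) : Prop :=
  exists P : pcoloring n k, uniquely_extends P /\ colored P = D.

From mathcomp Require Import all_boot fingroup perm zify.
Set Implicit Arguments. Unset Strict Implicit. Unset Printing Implicit Defensive.

(* Let c be the completion of a defining set D, with k = 2n - 2 colours, and
   call the cells outside D free. Any other proper colouring agreeing with c on
   D is c itself, so recolouring one free cell, or permuting colours among free
   cells, must break properness. Recolouring one free cell shows that its row
   and its column together contain all 2n - 2 colours; as each contains n of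
   them, exactly two colours are shared by the row and the column of a free
   cell. Swapping and rotating colours among free cells then rules out three
   free cells in a line, a free 2 x 2 rectangle, and a zigzag path of five free
   cells. Hence every free cell has at most one free neighbour in its row and
   one in its column, and a free cell with two free neighbours has a neighbour
   with only one, which no other cell shares. Give each free cell the weight
   2/(free cells in its row) + 2/(free cells in its column); the total is at
   most 4n. Cells with two free neighbours weigh 2 and those with one weigh 3,
   and the former inject into the latter, so the average weight is at least
   5/2 and 5 #|free| <= 8n. *)

Section Square.
Variables n k : nat.
Implicit Types (c : coloring n k) (D : {set cell n}) (u v : cell n).

Definition share u v := (u.1 == v.1) || (u.2 == v.2).

Lemma share_sym u v : share u v = share v u.
Proof. by rewrite /share eq_sym [u.2 == _]eq_sym. Qed.

Lemma in_LP c : in_L c <-> forall u v, u != v -> share u v -> c u != c v.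
Proof.
split=> [[cR cC] [i j] [i' j'] neq /orP[/eqP /= E | /eqP /= E] | cL].
- by rewrite -E in neq *; apply: cR; apply: contra_neq neq => ->.
- by rewrite -E in neq *; apply: cC; apply: contra_neq neq => ->.
split=> [i j j' | i i' j] neq; apply: cL; rewrite /share ?eqxx ?orbT //.
- by apply: contra_neq neq => -[].
- by apply: contra_neq neq => -[].
Qed.

Definition determines D c :=
  in_L c /\ forall c', in_L c' -> {in D, c' =1 c} -> c' = c.

Definition tr_cell v : cell n := (v.2, v.1).

Definition tr_coloring c : coloring n k := [ffun v => c (tr_cell v)].

Lemma tr_cellK : involutive tr_cell. Proof. by case. Qed.

Lemma in_L_tr c : in_L c -> in_L (tr_coloring c).
Proof. by case=> cR cC; split=> *; rewrite !ffunE; [apply: cC | apply: cR]. Qed.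

Lemma tr_coloringK : involutive tr_coloring.
Proof. by move=> c; apply/ffunP=> v; rewrite !ffunE tr_cellK. Qed.

Lemma determines_tr D c :
  determines D c -> determines (tr_cell @^-1: D) (tr_coloring c).
Proof.
case=> cL cU; split=> [|c' c'L agree]; first exact: in_L_tr.
rewrite -[c']tr_coloringK; congr tr_coloring.
apply: cU; first exact: in_L_tr.
by move=> v Dv; rewrite !ffunE agree ?ffunE ?inE tr_cellK.
Qed.

Definition row_colors c i := [set c (i, s) | s : 'I_n].
Definition col_colors c j := [set c (r, j) | r : 'I_n].

Lemma mem_row_colors c i s : c (i, s) \in row_colors c i.
Proof. exact: imset_f. Qed.

Lemma mem_col_colors c r j : c (r, j) \in col_colors c j.
Proof. exact: imset_f. Qed.

Lemma row_colors_tr c i : row_colors (tr_coloring c) i = col_colors c i.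
Proof. by apply: eq_imset => s; rewrite ffunE. Qed.

Lemma col_colors_tr c j : col_colors (tr_coloring c) j = row_colors c j.
Proof. by apply: eq_imset => r; rewrite ffunE. Qed.

Lemma card_row_colors c i : in_L c -> #|row_colors c i| = n.
Proof.
case=> cR _; rewrite card_imset ?card_ord // => s s' E.
by apply: contra_eq E; apply: cR.
Qed.

Lemma card_col_colors c j : in_L c -> #|col_colors c j| = n.
Proof. by move/in_L_tr/(card_row_colors j); rewrite row_colors_tr. Qed.

Section Determined.
Variables (D : {set cell n}) (c : coloring n k).
Hypothesis hc : determines D c.

Lemma row_proper i s s' : s != s' -> c (i, s) != c (i, s').
Proof. exact: hc.1.1. Qed.

Lemma col_proper r r' j : r != r' -> c (r, j) != c (r', j).
Proof. exact: hc.1.2. Qed.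

Lemma recolor_eq (h : cell n -> 'I_k) :
  (forall v, h v != c v -> v \notin D) ->
  (forall u v, u != v -> share u v -> h u != c u -> h u != h v) ->
  forall v, h v = c v.
Proof.
move=> hD hsh; have c'E : finfun h = c.
  apply: hc.2 => [|v Dv]; last by rewrite ffunE; apply: contraTeq Dv; apply: hD.
  apply/in_LP => u v uv suv; rewrite !ffunE.
  have [hu|hu] := eqVneq (h u) (c u); last exact: hsh.
  have [hv|hv] := eqVneq (h v) (c v); last first.
    by rewrite eq_sym; apply: hsh => //; rewrite 1?eq_sym // share_sym.
  by rewrite hu hv; apply: (proj1 (in_LP c) hc.1).
by move=> v; rewrite -c'E ffunE.
Qed.

Lemma free_cover i j b :
  (i, j) \notin D -> (b \in row_colors c i) || (b \in col_colors c j).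
Proof.
move=> Fij; apply/negPn/negP; rewrite negb_or => /andP[bR bC].
suff /(_ (i, j)) : forall v, (if v == (i, j) then b else c v) = c v.
  by rewrite eqxx => bE; rewrite bE mem_row_colors in bR.
apply: recolor_eq => [v | u [r s]].
  by case: (eqVneq v (i, j)) => [-> | _]; rewrite ?eqxx.
have [-> | _] := eqVneq u (i, j); last by rewrite eqxx.
rewrite eq_sym => /negbTE -> /orP[/eqP /= <- | /eqP /= <-] _.
- by apply: contraNneq bR => ->; apply: mem_row_colors.
- by apply: contraNneq bC => ->; apply: mem_col_colors.
Qed.

Hypothesis hk : k + 2 = n + n.

Lemma card_shared_colors i j :
  (i, j) \notin D -> #|row_colors c i :&: col_colors c j| = 2.
Proof.
move=> Fij; have := cardsUI (row_colors c i) (col_colors c j).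
have -> : row_colors c i :|: col_colors c j = setT.
  by apply/setP => b; rewrite !inE free_cover.
have cL := hc.1; rewrite cardsT card_ord card_row_colors // card_col_colors //; lia.
Qed.

Lemma no_three_shared i j b1 b2 b3 : (i, j) \notin D ->
  b1 != b2 -> b1 != b3 -> b2 != b3 ->
  b1 \in row_colors c i -> b1 \in col_colors c j ->
  b2 \in row_colors c i -> b2 \in col_colors c j ->
  b3 \in row_colors c i -> b3 \in col_colors c j -> False.
Proof.
move=> /card_shared_colors card2 b12 b13 b23 R1 C1 R2 C2 R3 C3.
suff : 2 < #|row_colors c i :&: col_colors c j| by rewrite card2.
apply/card_gt2P; exists b1, b2, b3; rewrite !inE R1 C1 R2 C2 R3 C3.
by split; split; rewrite // eq_sym.
Qed.

Lemma row_partner_uniq i x y z : (i, x) \notin D ->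
  y != z -> x != y -> x != z ->
  c (i, y) \in col_colors c x -> c (i, z) \in col_colors c x -> False.
Proof.
move=> Fx yz xy xz Cy Cz.
by apply: (no_three_shared Fx (row_proper i xy) (row_proper i xz) (row_proper i yz));
  rewrite ?mem_row_colors ?mem_col_colors.
Qed.

Lemma row_perm_id i (g : {perm 'I_n}) :
  (forall s, g s != s -> (i, s) \notin D) ->
  (forall r s, r != i -> g s != s -> c (r, s) != c (i, g s)) -> g = 1%g.
Proof.
move=> gD gC; apply/permP => s; rewrite perm1.
suff /(_ (i, s)) : forall v, (if v.1 == i then c (i, g v.2) else c v) = c v.
  by rewrite eqxx /= => /eqP E; apply: contraTeq E; apply: row_proper.
apply: recolor_eq => [[r s'] | [r s'] [r' s'']] /=.
  case: (eqVneq r i) => [-> gs | _]; last by rewrite eqxx.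
  by apply: gD; apply: contra_neq gs => ->.
case: (eqVneq r i) => [-> | _]; last by rewrite eqxx.
move=> uv suv gs; have {}gs : g s' != s' by apply: contra_neq gs => ->.
have [r'i | r'i] := eqVneq r' i.
  by apply: row_proper; rewrite (inj_eq perm_inj); apply: contra_neq uv => ->; rewrite r'i.
move: suv; rewrite /share /= eq_sym (negbTE r'i) /= => /eqP <-.
by rewrite eq_sym; apply: gC.
Qed.

Lemma swap_row i j j' : j != j' -> (i, j) \notin D -> (i, j') \notin D ->
  (c (i, j') \in col_colors c j) || (c (i, j) \in col_colors c j').
Proof.
move=> jj' Fj Fj'; apply/negPn/negP; rewrite negb_or => /andP[nj nj'].
suff /permP/(_ j) : tperm j j' = 1%g.
  by rewrite tpermL perm1 => /eqP; rewrite eq_sym (negbTE jj').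
apply: (row_perm_id (i := i)) => [s | r s _];
  case: tpermP => [-> | -> | _ _] //; rewrite ?eqxx //.
- by move=> _; apply: contraNneq nj => <-; apply: mem_col_colors.
- by move=> _; apply: contraNneq nj' => <-; apply: mem_col_colors.
Qed.

Lemma rotate_row i j1 j2 j3 : j1 != j2 -> j1 != j3 -> j2 != j3 ->
  (i, j1) \notin D -> (i, j2) \notin D -> (i, j3) \notin D ->
  c (i, j2) \in col_colors c j1 -> c (i, j3) \in col_colors c j2 ->
  c (i, j1) \in col_colors c j3 -> False.
Proof.
move=> j12 j13 j23 F1 F2 F3 C12 C23 C31.
have j21 : j2 != j1 by rewrite eq_sym.
have j31 : j3 != j1 by rewrite eq_sym.
have j32 : j3 != j2 by rewrite eq_sym.
pose g := (tperm j1 j3 * tperm j1 j2)%g.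
have g1 : g j1 = j3 by rewrite permM tpermL tpermD.
have g2 : g j2 = j1 by rewrite permM (@tpermD _ j1 j3) ?tpermR // eq_sym.
have g3 : g j3 = j2 by rewrite permM tpermR tpermL.
have g0 s : s \notin [:: j1; j2; j3] -> g s = s.
  by rewrite !inE => /norP[s1 /norP[s2 s3]]; rewrite permM !tpermD // 1?eq_sym.
suff /permP/(_ j1) : g = 1%g by rewrite g1 perm1 => /eqP; rewrite eq_sym (negbTE j13).
apply: (row_perm_id (i := i)) => [s | r s _];
  (have [/g0 -> | ] := boolP (s \notin [:: j1; j2; j3]); first by rewrite eqxx);
  rewrite negbK !inE => /or3P[] /eqP -> // _; apply/negP => /eqP E.
- by apply: (row_partner_uniq F1 j23 j12 j13 C12); rewrite -g1 -E mem_col_colors.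
- by apply: (row_partner_uniq F2 j31 j23 j21 C23); rewrite -g2 -E mem_col_colors.
- by apply: (row_partner_uniq F3 j12 j31 j32 C31); rewrite -g3 -E mem_col_colors.
Qed.

Lemma row_free3_contra i j1 j2 j3 : j1 != j2 -> j1 != j3 -> j2 != j3 ->
  (i, j1) \notin D -> (i, j2) \notin D -> (i, j3) \notin D -> False.
Proof.
move=> j12 j13 j23 F1 F2 F3.
have j21 : j2 != j1 by rewrite eq_sym.
have j31 : j3 != j1 by rewrite eq_sym.
have j32 : j3 != j2 by rewrite eq_sym.
case/orP: (swap_row j12 F1 F2) => a; case/orP: (swap_row j13 F1 F3) => b;
  case/orP: (swap_row j23 F2 F3) => d;
  by [ apply: (row_partner_uniq F1 j23 j12 j13 a b)
     | apply: (row_partner_uniq F2 j13 j21 j23 a d)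
     | apply: (row_partner_uniq F3 j12 j31 j32 b d)
     | apply: (rotate_row j12 j13 j23 F1 F2 F3 a d b)
     | apply: (rotate_row j13 j12 j32 F1 F3 F2 b d a) ].
Qed.
End Determined.

Lemma swap_col D c : determines D c -> forall i i' j, i != i' ->
  (i, j) \notin D -> (i', j) \notin D ->
  (c (i', j) \in row_colors c i) || (c (i, j) \in row_colors c i').
Proof.
move=> /determines_tr hc i i' j ii' Fi Fi'.
have := swap_row hc ii' (i := j); rewrite !inE !ffunE !col_colors_tr; exact.
Qed.

Lemma col_free3_contra D c : determines D c -> k + 2 = n + n -> forall i1 i2 i3 j,
  i1 != i2 -> i1 != i3 -> i2 != i3 ->
  (i1, j) \notin D -> (i2, j) \notin D -> (i3, j) \notin D -> False.
Proof.
move=> /determines_tr hc hk i1 i2 i3 j i12 i13 i23.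
by have := row_free3_contra hc hk i12 i13 i23 (i := j); rewrite !inE.
Qed.

Definition other (a b x : 'I_n) := if x == a then b else a.

Lemma mem_other a b x : other a b x \in [:: a; b].
Proof. by rewrite /other !inE; case: ifP; rewrite eqxx ?orbT. Qed.

Lemma other_neq a b x : a != b -> x \in [:: a; b] -> other a b x != x.
Proof.
by rewrite /other !inE => ab /orP[] /eqP ->; rewrite ?eqxx ?(eq_sym b a) ?(negbTE ab).
Qed.

Lemma other_eq a b x y : a != b -> x \in [:: a; b] -> y \in [:: a; b] ->
  y != x -> y = other a b x.
Proof.
rewrite /other !inE => ab /orP[] /eqP -> /orP[] /eqP ->; rewrite ?eqxx //.
by rewrite (eq_sym b) (negbTE ab).
Qed.

Section Rectangle.
Variables (D : {set cell n}) (c : coloring n k).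
Hypotheses (hc : determines D c) (hk : k + 2 = n + n).
Variables (i i' j j' : 'I_n).
Hypotheses (ii' : i != i') (jj' : j != j').
Hypothesis rect_free : forall x y,
  x \in [:: i; i'] -> y \in [:: j; j'] -> (x, y) \notin D.

Definition row_ok v := [forall r, (r \notin [:: i; i']) ==>
  (c (r, v.2) != c (v.1, other j j' v.2))].
Definition col_ok v := [forall s, (s \notin [:: j; j']) ==>
  (c (v.1, s) != c (other i i' v.1, v.2))].

Lemma row_ok_or_col_ok x y : x \in [:: i; i'] -> y \in [:: j; j'] ->
  row_ok (x, y) || col_ok (x, y).
Proof.
move=> xI yJ; apply/negPn/negP; rewrite negb_or.
case/andP => /forallPn [r]; rewrite negb_imply negbK /= => /andP[rI /eqP Er].
case/forallPn => s; rewrite negb_imply negbK /= => /andP[sJ /eqP Es].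
have rx' : r != other i i' x by apply: contraNneq rI => ->; apply: mem_other.
apply: (no_three_shared hc hk (rect_free xI yJ) (b1 := c (x, y))
  (b2 := c (x, other j j' y)) (b3 := c (other i i' x, y))).
- by rewrite eq_sym; apply: (row_proper hc); apply: other_neq.
- by rewrite eq_sym; apply: (col_proper hc); apply: other_neq.
- by rewrite -Er; apply: (col_proper hc).
all: by rewrite ?mem_row_colors ?mem_col_colors // -?Er -?Es
  ?mem_row_colors ?mem_col_colors.
Qed.

Definition corner v := (v.1 \in [:: i; i']) && (v.2 \in [:: j; j']).

(* Each corner takes the colour of its neighbour in the same row or in the same
   column, choosing one that does not clash outside the rectangle; one of the
   two is always possible by row_ok_or_col_ok. *)
Definition rect_move v :=
  if corner v then
    if row_ok v then (v.1, other j j' v.2) else (other i i' v.1, v.2)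
  else v.

Lemma rect_move_id v : ~~ corner v -> rect_move v = v.
Proof. by rewrite /rect_move => /negbTE ->. Qed.

Lemma rect_move_corners x y x' y' :
  x \in [:: i; i'] -> y \in [:: j; j'] -> x' \in [:: i; i'] -> y' \in [:: j; j'] ->
  (x, y) != (x', y') -> share (x, y) (x', y') ->
  c (rect_move (x, y)) != c (rect_move (x', y')).
Proof.
move=> xI yJ x'I y'J + /orP[/eqP /= ex | /eqP /= ey];
  rewrite /rect_move /corner xI yJ x'I y'J /=.
- rewrite -ex => yy; have {}yy : y' != y by apply: contra_neq yy => ->.
  have y'y : y != y' by rewrite eq_sym.
  have x'x := other_neq ii' xI; have xx' : x != other i i' x by rewrite eq_sym.
  rewrite -(other_eq jj' yJ y'J yy) -(other_eq jj' y'J yJ y'y).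
  by do 2 case: ifP => _; [apply: (row_proper hc) | apply: (col_proper hc)
    | apply: (col_proper hc) | apply: (row_proper hc)].
- rewrite -ey => xx; have {}xx : x' != x by apply: contra_neq xx => ->.
  have x'x : x != x' by rewrite eq_sym.
  have y'y := other_neq jj' yJ; have yy' : y != other j j' y by rewrite eq_sym.
  rewrite -(other_eq ii' xI x'I xx) -(other_eq ii' x'I xI x'x).
  by do 2 case: ifP => _; [apply: (col_proper hc) | apply: (row_proper hc)
    | apply: (row_proper hc) | apply: (col_proper hc)].
Qed.

Lemma rect_move_outside x y v : x \in [:: i; i'] -> y \in [:: j; j'] ->
  ~~ corner v -> share (x, y) v ->
  c (rect_move (x, y)) != c v.
Proof.
case: v => r s xI yJ; rewrite /corner /= => out /orP[/eqP /= ? | /eqP /= ?]; subst;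
  rewrite /rect_move /corner xI yJ /=.
- rewrite xI /= in out; case: ifP => [_ | /negbT row_ko].
    by apply: (row_proper hc); apply: contraNneq out => <-; apply: mem_other.
  move: (row_ok_or_col_ok xI yJ); rewrite (negbTE row_ko) => /forallP/(_ s).
  by rewrite out eq_sym.
- rewrite yJ andbT in out; case: ifP => [/forallP/(_ r) | _]; first by rewrite out eq_sym.
  by apply: (col_proper hc); apply: contraNneq out => <-; apply: mem_other.
Qed.

Lemma rect_free_contra : False.
Proof.
have iI : i \in [:: i; i'] := mem_head _ _; have jJ : j \in [:: j; j'] := mem_head _ _.
suff /(_ (i, j)) /eqP : forall v, c (rect_move v) = c v.
  rewrite /rect_move /corner iI jJ /other !eqxx; apply/negP.
  by case: ifP => _; [apply: (row_proper hc) | apply: (col_proper hc)]; rewrite eq_sym.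
apply: (recolor_eq hc) => [[x y] | [x y] v uv suv].
  have [/andP[xI yJ] _ | /rect_move_id ->] := boolP (corner (x, y)); last by rewrite eqxx.
  exact: rect_free.
have [/andP[xI yJ] _ | /rect_move_id ->] := boolP (corner (x, y)); last by rewrite eqxx.
have [/andP | out] := boolP (corner v).
  by case: v uv suv => x' y' uv suv [x'I y'J]; apply: rect_move_corners.
by rewrite (rect_move_id out) rect_move_outside.
Qed.
End Rectangle.

(* The zigzag P - Q - A - R - S of free cells, with A = (i, j), Q = (i, j2),
   R = (i2, j), P = (i3, j2) and S = (i2, j3). In the names of the case
   lemmas, XY says that the colour of Y also occurs in the line through X
   that does not contain Y. In hypothesis names, a, q, r, p, s denote the
   colours of these cells and u, v, t, w those of (i, j3), (i2, j2), (i3, j)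
   and (i3, j3). *)
Section Path.
Variables (D : {set cell n}) (c : coloring n k).
Hypotheses (hc : determines D c) (hk : k + 2 = n + n).
Variables (i i2 i3 j j2 j3 : 'I_n).
Hypotheses (i12 : i != i2) (i13 : i != i3) (i23 : i2 != i3).
Hypotheses (j12 : j != j2) (j13 : j != j3) (j23 : j2 != j3).
Hypotheses (FA : (i, j) \notin D) (FQ : (i, j2) \notin D) (FR : (i2, j) \notin D).
Hypotheses (FP : (i3, j2) \notin D) (FS : (i2, j3) \notin D).

Local Ltac three_shared_contra F b1 b2 b3 :=
  exfalso; apply: (no_three_shared hc hk F (b1 := b1) (b2 := b2) (b3 := b3));
  by [ | rewrite eq_sym | apply: mem_row_colors | apply: mem_col_colors
       | apply: (row_proper hc) | apply: (row_proper hc); rewrite eq_sym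
       | apply: (col_proper hc) | apply: (col_proper hc); rewrite eq_sym ].

Lemma path_case_AQ_AR :
  c (i, j2) \in col_colors c j -> c (i2, j) \in row_colors c i -> False.
Proof.
move=> Cq Rr.
have qr : c (i, j2) = c (i2, j).
  by apply/eqP/contraT => qr; three_shared_contra FA (c (i, j)) (c (i, j2)) (c (i2, j)).
have Ru : c (i, j3) \in row_colors c i2.
  case/orP: (free_cover hc (c (i, j3)) FR) => // Cu.
  by three_shared_contra FA (c (i, j)) (c (i, j2)) (c (i, j3)).
have Cs : c (i2, j3) \in col_colors c j.
  case/orP: (swap_row hc j13 FR FS) => // Cr.
  have ru : c (i2, j) != c (i, j3) by rewrite -qr; apply: (row_proper hc).
  by three_shared_contra FS (c (i2, j3)) (c (i2, j)) (c (i, j3)).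
have Rv : c (i2, j2) \in row_colors c i.
  case/orP: (free_cover hc (c (i2, j2)) FA) => // Cv.
  by three_shared_contra FR (c (i2, j)) (c (i2, j3)) (c (i2, j2)).
have Ct : c (i3, j) \in col_colors c j2.
  case/orP: (free_cover hc (c (i3, j)) FQ) => // Rt.
  have qt : c (i, j2) != c (i3, j) by rewrite qr; apply: (col_proper hc).
  by three_shared_contra FA (c (i, j)) (c (i, j2)) (c (i3, j)).
have tq : c (i3, j) != c (i, j2) by rewrite qr; apply: (col_proper hc); rewrite eq_sym.
case/orP: (swap_col hc i13 FQ FP) => H.
- by three_shared_contra FQ (c (i, j2)) (c (i2, j2)) (c (i3, j2)).
- by three_shared_contra FP (c (i3, j2)) (c (i3, j)) (c (i, j2)).
Qed.

Lemma path_case_AQ_RA :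
  c (i, j2) \in col_colors c j -> c (i, j) \in row_colors c i2 -> False.
Proof.
move=> Cq Ra.
have Ru : c (i, j3) \in row_colors c i2.
  case/orP: (free_cover hc (c (i, j3)) FR) => // Cu.
  by three_shared_contra FA (c (i, j)) (c (i, j2)) (c (i, j3)).
have Cs : c (i2, j3) \in col_colors c j.
  case/orP: (swap_row hc j13 FR FS) => // Cr.
  have [ru | ru] := eqVneq (c (i2, j)) (c (i, j3)).
    have Rr : c (i2, j) \in row_colors c i by rewrite ru mem_row_colors.
    have qr : c (i, j2) != c (i2, j) by rewrite ru; apply: (row_proper hc).
    by three_shared_contra FA (c (i, j)) (c (i, j2)) (c (i2, j)).
  by three_shared_contra FS (c (i2, j3)) (c (i2, j)) (c (i, j3)).
have sa : c (i2, j3) = c (i, j).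
  by apply/eqP/contraT => sa; three_shared_contra FR (c (i2, j)) (c (i, j)) (c (i2, j3)).
have Rv : c (i2, j2) \in row_colors c i.
  case/orP: (free_cover hc (c (i2, j2)) FA) => // Cv.
  have av : c (i, j) != c (i2, j2) by rewrite -sa eq_sym; apply: (row_proper hc).
  by three_shared_contra FR (c (i2, j)) (c (i, j)) (c (i2, j2)).
have Rq : c (i, j2) \in row_colors c i3.
  case/orP: (swap_col hc i13 FQ FP) => // Rp.
  by three_shared_contra FQ (c (i, j2)) (c (i2, j2)) (c (i3, j2)).
have tq : c (i3, j) = c (i, j2).
  apply/eqP/contraT => tq; case/orP: (free_cover hc (c (i3, j)) FQ) => H.
  - by three_shared_contra FA (c (i, j)) (c (i, j2)) (c (i3, j)).
  - by three_shared_contra FP (c (i3, j2)) (c (i, j2)) (c (i3, j)).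
have qw : c (i, j2) != c (i3, j3) by rewrite -tq; apply: (row_proper hc).
case/orP: (free_cover hc (c (i3, j3)) FQ) => Rw; last first.
  by three_shared_contra FP (c (i3, j2)) (c (i, j2)) (c (i3, j3)).
case/orP: (free_cover hc (c (i3, j3)) FR) => Cw.
- by three_shared_contra FS (c (i2, j3)) (c (i, j3)) (c (i3, j3)).
- have aw : c (i, j) != c (i3, j3) by rewrite -sa; apply: (col_proper hc).
  by three_shared_contra FA (c (i, j)) (c (i, j2)) (c (i3, j3)).
Qed.

Lemma path_case_QA_RA :
  c (i, j) \in col_colors c j2 -> c (i, j) \in row_colors c i2 -> False.
Proof.
move=> Ca Ra.
have va : c (i2, j2) = c (i, j).
  apply/eqP/contraT => va; case/orP: (free_cover hc (c (i2, j2)) FA) => H.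
  - by three_shared_contra FQ (c (i, j2)) (c (i, j)) (c (i2, j2)).
  - by three_shared_contra FR (c (i2, j)) (c (i, j)) (c (i2, j2)).
have Cr : c (i2, j) \in col_colors c j3.
  case/orP: (swap_row hc j13 FR FS) => // Cs.
  have a_s : c (i, j) != c (i2, j3) by rewrite -va; apply: (row_proper hc).
  by three_shared_contra FR (c (i2, j)) (c (i, j)) (c (i2, j3)).
have Rq : c (i, j2) \in row_colors c i3.
  case/orP: (swap_col hc i13 FQ FP) => // Rp.
  have ap : c (i, j) != c (i3, j2) by rewrite -va; apply: (col_proper hc).
  by three_shared_contra FQ (c (i, j2)) (c (i, j)) (c (i3, j2)).
have Cu : c (i, j3) \in col_colors c j.
  case/orP: (free_cover hc (c (i, j3)) FR) => // Ru.
  have [<- | ru] := eqVneq (c (i2, j)) (c (i, j3)); first exact: mem_col_colors.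
  by three_shared_contra FS (c (i2, j3)) (c (i2, j)) (c (i, j3)).
have Rt : c (i3, j) \in row_colors c i.
  case/orP: (free_cover hc (c (i3, j)) FQ) => // Ct.
  have [tq | tq] := eqVneq (c (i3, j)) (c (i, j2)).
    have Cq : c (i, j2) \in col_colors c j by rewrite -tq mem_col_colors.
    by three_shared_contra FA (c (i, j)) (c (i, j3)) (c (i, j2)).
  by three_shared_contra FP (c (i3, j2)) (c (i3, j)) (c (i, j2)).
have Cw : c (i3, j3) \in col_colors c j.
  case/orP: (free_cover hc (c (i3, j3)) FR) => // Rw.
  have [<- | rw] := eqVneq (c (i2, j)) (c (i3, j3)); first exact: mem_col_colors.
  by three_shared_contra FS (c (i2, j3)) (c (i2, j)) (c (i3, j3)).
case/orP: (free_cover hc (c (i3, j3)) FQ) => H.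
- have [wa | wa] := eqVneq (c (i3, j3)) (c (i, j)).
    have Ca3 : c (i, j) \in col_colors c j3 by rewrite -wa mem_col_colors.
    have sa : c (i2, j3) != c (i, j) by rewrite -va; apply: (row_proper hc); rewrite eq_sym.
    by three_shared_contra FS (c (i2, j3)) (c (i2, j)) (c (i, j)).
  by three_shared_contra FA (c (i, j)) (c (i3, j)) (c (i3, j3)).
- have [wq | wq] := eqVneq (c (i3, j3)) (c (i, j2)).
    have Cq : c (i, j2) \in col_colors c j by rewrite -wq.
    by three_shared_contra FA (c (i, j)) (c (i, j3)) (c (i, j2)).
  by three_shared_contra FP (c (i3, j2)) (c (i, j2)) (c (i3, j3)).
Qed.
End Path.

Lemma free_path5_distinct_contra D c : determines D c -> k + 2 = n + n ->
  forall i i2 i3 j j2 j3,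
  i != i2 -> i != i3 -> i2 != i3 -> j != j2 -> j != j3 -> j2 != j3 ->
  (i, j) \notin D -> (i, j2) \notin D -> (i2, j) \notin D ->
  (i3, j2) \notin D -> (i2, j3) \notin D -> False.
Proof.
move=> hc hk i i2 i3 j j2 j3 i12 i13 i23 j12 j13 j23 FA FQ FR FP FS.
case/orP: (swap_row hc j12 FA FQ) => [Cq | Ca];
  case/orP: (swap_col hc i12 FA FR) => [Rr | Ra].
- exact: (path_case_AQ_AR hc hk i12 i13 i23 j12 j13 j23 FA FQ FR FP FS Cq Rr).
- exact: (path_case_AQ_RA hc hk i12 i13 i23 j12 j13 j23 FA FQ FR FP FS Cq Ra).
- (* transposition exchanges the roles of Q and R *)
  apply: (path_case_AQ_RA (determines_tr hc) hk j12 j13 j23 i12 i13 i23);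
  by rewrite ?inE ?ffunE ?row_colors_tr ?col_colors_tr.
- exact: (path_case_QA_RA hc hk i12 i13 i23 j12 j13 j23 FA FQ FR FP FS Ca Ra).
Qed.

Lemma free_path5_contra D c : determines D c -> k + 2 = n + n ->
  forall i i2 i3 j j2 j3, i2 != i -> i3 != i -> j2 != j -> j3 != j ->
  (i, j) \notin D -> (i, j2) \notin D -> (i2, j) \notin D ->
  (i3, j2) \notin D -> (i2, j3) \notin D -> False.
Proof.
move=> hc hk i i2 i3 j j2 j3.
case: (eqVneq i3 i2) => [-> | i32]; case: (eqVneq j3 j2) => [-> | j32];
  move=> i21 i31 j21 j31 FA FQ FR FP FS.
- apply: (@rect_free_contra D c hc hk i i2 j j2); rewrite 1?eq_sym // => x y.
  by rewrite !inE => /orP[] /eqP -> /orP[] /eqP ->.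
- by apply: (row_free3_contra hc hk _ _ _ FR FP FS); rewrite eq_sym.
- by apply: (col_free3_contra hc hk _ _ _ FQ FP FS); rewrite // eq_sym.
- by apply: (@free_path5_distinct_contra D c hc hk i i2 i3 j j2 j3); rewrite // eq_sym.
Qed.

Lemma sum_line_weights (U : {set cell n}) (p : cell n -> 'I_n) :
  \sum_(v in U) 2 %/ #|[set w in U | p w == p v]| <= 2 * n.
Proof.
have -> : 2 * n = \sum_(x < n) 2 by rewrite sum_nat_const card_ord mulnC.
rewrite (partition_big p xpredT) //=; apply: leq_sum => x _.
rewrite (eq_bigr (fun=> 2 %/ #|[set w in U | p w == x]|)) => [|v /andP[_ /eqP ->]] //.
by rewrite sum_nat_const -cardsE mulnC leq_divM.
Qed.

Lemma sum_mem_card (T : finType) (A B : {set T}) :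
  \sum_(x in A) (x \in B) = #|A :&: B|.
Proof.
rewrite -sum1_card [RHS](eq_bigl (fun x => (x \in A) && (x \in B))) => [|x].
  by rewrite big_mkcondr; apply: eq_bigr => x _; case: (x \in B).
by rewrite inE.
Qed.

Section Counting.
Variables (D : {set cell n}) (c : coloring n k).
Hypotheses (hc : determines D c) (hk : k + 2 = n + n).

Definition row_count v := #|[set w in ~: D | w.1 == v.1]|.
Definition col_count v := #|[set w in ~: D | w.2 == v.2]|.
Definition mates v :=
  ([set w in ~: D | w.1 == v.1] :|: [set w in ~: D | w.2 == v.2]) :\ v.

Lemma mem_mates u v : (u \in mates v) = [&& u != v, u \notin D & share u v].
Proof. by rewrite !inE -andb_orr. Qed.

Lemma card_mates v : v \notin D -> #|mates v| = row_count v + col_count v - 2.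
Proof.
move=> Fv; rewrite /mates /row_count /col_count.
set R := [set w in ~: D | w.1 == v.1]; set C := [set w in ~: D | w.2 == v.2].
have RC : R :&: C = [set v].
  apply/setP => u; rewrite !inE; apply/idP/eqP => [| ->]; last by rewrite Fv !eqxx.
  by case/andP => /andP[_ /eqP] + /andP[_ /eqP]; case: u v {Fv R C} => ? ? [? ?] /= -> ->.
have := cardsUI R C; rewrite RC cards1 (cardsD1 v (R :|: C)) !inE Fv eqxx /= => <-.
by rewrite add1n addn1 !subSS subn0.
Qed.

Lemma row_count_le2 v : row_count v <= 2.
Proof.
rewrite leqNgt; apply/negP => /card_gt2P [[a s1] [[b s2] [[d s3]]]].
rewrite !inE /= => -[[/andP[F1 /eqP E1] /andP[F2 /eqP E2] /andP[F3 /eqP E3]] [n12 n23 n31]].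
subst a b d; apply: (row_free3_contra hc hk _ _ _ F1 F2 F3).
- by apply: contra_neq n12 => ->.
- by apply: contra_neq n31 => ->.
- by apply: contra_neq n23 => ->.
Qed.

Lemma col_count_le2 v : col_count v <= 2.
Proof.
rewrite leqNgt; apply/negP => /card_gt2P [[r1 a] [[r2 b] [[r3 d]]]].
rewrite !inE /= => -[[/andP[F1 /eqP E1] /andP[F2 /eqP E2] /andP[F3 /eqP E3]] [n12 n23 n31]].
subst a b d; apply: (col_free3_contra hc hk _ _ _ F1 F2 F3).
- by apply: contra_neq n12 => ->.
- by apply: contra_neq n31 => ->.
- by apply: contra_neq n23 => ->.
Qed.

Lemma row_count_gt0 v : v \notin D -> 0 < row_count v.
Proof. by move=> Fv; apply/card_gt0P; exists v; rewrite !inE Fv eqxx. Qed.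

Lemma col_count_gt0 v : v \notin D -> 0 < col_count v.
Proof. by move=> Fv; apply/card_gt0P; exists v; rewrite !inE Fv eqxx. Qed.

Lemma row_mate i j : (i, j) \notin D -> row_count (i, j) = 2 ->
  exists2 s, s != j & (i, s) \notin D.
Proof.
move=> Fv /eqP; rewrite eqn_leq => /andP[_ /card_gt1P [[a s] [[b t] []]]].
rewrite !inE /= => /andP[Fs /eqP ?] /andP[Ft /eqP ?] st; subst a b.
have [sj | sj] := eqVneq s j; last by exists s.
by exists t => //; apply: contra_neq st => ->; rewrite sj.
Qed.

Lemma col_mate i j : (i, j) \notin D -> col_count (i, j) = 2 ->
  exists2 r, r != i & (r, j) \notin D.
Proof.
move=> Fv /eqP; rewrite eqn_leq => /andP[_ /card_gt1P [[r a] [[t b] []]]].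
rewrite !inE /= => /andP[Fr /eqP ?] /andP[Ft /eqP ?] rt; subst a b.
have [ri | ri] := eqVneq r i; last by exists r.
by exists t => //; apply: contra_neq rt => ->; rewrite ri.
Qed.

Definition one_mate := [set v in ~: D | #|mates v| == 1].
Definition two_mates := [set v in ~: D | #|mates v| == 2].

Lemma row_mate_mates i j s : s != j -> (i, s) \notin D -> (i, s) \in mates (i, j).
Proof.
move=> sj Fs; rewrite mem_mates Fs /share /= eqxx andbT.
by apply: contra_neq sj => -[].
Qed.

Lemma col_mate_mates i j r : r != i -> (r, j) \notin D -> (r, j) \in mates (i, j).
Proof.
move=> ri Fr; rewrite mem_mates Fr /share /= eqxx orbT andbT.
by apply: contra_neq ri => -[].
Qed.

Lemma not_one_mate v : v \notin D -> v \notin one_mate ->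
  (row_count v == 2) = (col_count v == 2).
Proof.
move=> Fv; rewrite !inE Fv card_mates //=.
have := row_count_gt0 Fv; have := row_count_le2 v.
have := col_count_gt0 Fv; have := col_count_le2 v.
by case: (row_count v) => [|[|[|?]]] //; case: (col_count v) => [|[|[|?]]].
Qed.

Lemma two_mates_mate_one v : v \in two_mates -> exists w, w \in mates v :&: one_mate.
Proof.
case: v => i j; rewrite !inE => /andP[Fv]; rewrite card_mates // => /eqP cnt.
have := row_count_le2 (i, j); have := col_count_le2 (i, j) => cc2 rc2.
have /eqP rc : row_count (i, j) == 2 by rewrite eqn_leq rc2; lia.
have /eqP cc : col_count (i, j) == 2 by rewrite eqn_leq cc2; lia.
have [s sj Fs] := row_mate Fv rc; have [r ri Fr] := col_mate Fv cc.
have [Qone | Qtwo] := boolP ((i, s) \in one_mate).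
  by exists (i, s); rewrite inE Qone row_mate_mates.
have [Rone | Rtwo] := boolP ((r, j) \in one_mate).
  by exists (r, j); rewrite inE Rone col_mate_mates.
have /eqP/(col_mate Fs)[i3 i3i Fi3] : col_count (i, s) == 2.
  by rewrite -(not_one_mate Fs Qtwo); apply/eqP.
have /eqP/(row_mate Fr)[j3 j3j Fj3] : row_count (r, j) == 2.
  by rewrite (not_one_mate Fr Rtwo); apply/eqP.
by case: (free_path5_contra hc hk ri i3i sj j3j Fv Fs Fr Fi3 Fj3).
Qed.

Lemma card_two_mates_le : #|two_mates| <= #|one_mate|.
Proof.
pose g v := odflt v [pick w in mates v :&: one_mate].
have gP v : v \in two_mates -> g v \in mates v :&: one_mate.
  by case/two_mates_mate_one => w Hw; rewrite /g; case: pickP => [// | /(_ w)]; rewrite Hw.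
have mate_sym u w : u \notin D -> w \in mates u -> u \in mates w.
  by move=> Fu; rewrite !mem_mates eq_sym share_sym Fu => /and3P[-> _ ->].
rewrite -(card_in_imset (f := g)) => [|v v' Hv Hv' gE].
  apply/subset_leq_card/subsetP => _ /imsetP[v /gP + ->].
  by case/setIP.
have /setIP[Mv] := gP v Hv; rewrite !inE => /andP[_ /eqP card1].
have /setIP[Mv' _] := gP v' Hv'; rewrite -gE in Mv'.
move: Hv Hv'; rewrite !inE => /andP[Fv _] /andP[Fv' _].
move: (mate_sym _ _ Fv Mv) (mate_sym _ _ Fv' Mv').
by move/card_le1_eqP: (eq_leq card1) => uniq M M'; apply: uniq.
Qed.

Lemma free_count_bound : 5 * #|~: D| <= 8 * n.
Proof.
have weight v : v \in ~: D -> 5 + (v \in one_mate) <=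
    2 * (2 %/ row_count v + 2 %/ col_count v) + (v \in two_mates).
  rewrite inE => Fv; rewrite !inE Fv card_mates //=.
  have := row_count_gt0 Fv; have := row_count_le2 v.
  have := col_count_gt0 Fv; have := col_count_le2 v.
  by case: (row_count v) => [|[|[|?]]] //; case: (col_count v) => [|[|[|?]]].
have : \sum_(v in ~: D) (5 + (v \in one_mate)) <=
    \sum_(v in ~: D) (2 * (2 %/ row_count v + 2 %/ col_count v) + (v \in two_mates)).
  exact: leq_sum.
rewrite !big_split /= big1_eq !sum_mem_card sum_nat_const.
rewrite !(setIidPr _); last 2 first.
- by apply/subsetP => v; rewrite !inE => /andP[].
- by apply/subsetP => v; rewrite !inE => /andP[].
have : \sum_(v in ~: D) 2 %/ row_count v <= 2 * n := sum_line_weights (~: D) fst.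
have : \sum_(v in ~: D) 2 %/ col_count v <= 2 * n := sum_line_weights (~: D) snd.
have := card_two_mates_le.
(* lia must see the sums and cardinalities as plain atoms *)
move: (\sum_(v in ~: D) _) (\sum_(v in ~: D) _) #|one_mate| #|two_mates| #|~: D|.
by move=> SR SC one two free; lia.
Qed.
End Counting.
End Square.

Lemma determines_of_uniquely_extends n k (P : pcoloring n k) :
  uniquely_extends P -> exists c : coloring n k, determines (colored P) c.
Proof.
case=> c [[cL cP] cU]; exists c; split=> // c' c'L agree; symmetry.
by apply: cU; split=> // x a Px; rewrite agree ?inE ?Px //; apply: cP.
Qed.

Theorem mainTheorem2 (n : nat) (D : {set cell n}) :
  1 <= n -> defining_set (2 * n - 2) D ->
  n ^ 2 - (8 * n) %/ 5 <= #|D|.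
Proof.
move=> n_gt0 [P [/determines_of_uniquely_extends [c hc] <-]].
have /(free_count_bound hc) : 2 * n - 2 + 2 = n + n by lia.
have := cardsC (colored P); rewrite card_prod card_ord.
move: #|colored P| #|~: colored P| => d u; lia.
Qed.
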